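(* Let $G$ be a directed graph on vertex set $V$ with $|V|=n$ odd and integer edge weights in $[-M,M]$, $M\ge1$; extend $w$ to all ordered pairs $(u,v)\in V\times V$ (including $u=v$) by setting $w(u,v)=4M$ when $(u,v)$ is not an edge. Let $H=100M$. Let $G'$ be the undirected graph with vertex set $\{u_A,u_B,u_{B'},u_C,u_{C'}:u\in V\}$ and, for all $u,v\in V$ (not necessarily distinct), edges $u_A v_B$ of weight $3H+w(u,v)$, $u_A v_{B'}$ of weight $3H-w(u,v)$, $u_A v_C$ of weight $6H-w(v,u)$, $u_A v_{C'}$ of weight $3H+w(v,u)$, $u_Bv_C$ of weight $3H+w(u,v)$, and (for $u\ne v$) $u_Av_A$ of weight $H$. Let $G'_0$ be $G'$ with every weight multiplied by $4n$, and write $A=\{u_A:u\in V\}$. For $S\subseteq A$ let $G'_S$ be obtained from $G'_0$ by subtracting $1$ from the weight of every edge $s v_B$ and $s v_C$ with $s\in S$, and adding $1$ to the weight of every edge $s v_{B'}$ with $s\in S$. Then the median value $\min_{p}\sum_{q}d_{G'_S}(p,q)$ of $G'_S$ is odd if and only if $S$ contains a vertex $p$ attaining $\min_{p}\sum_q d_{G'}(p,q)$.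
   Context: $d_X(p,q)$ denotes shortest-path distance in the weighted graph $X$; sums $\sum_q$ range over all vertices of the graph. *)

From HB Require Import structures.
From mathcomp Require Import all_boot all_order all_algebra.
Set Implicit Arguments. Unset Strict Implicit. Unset Printing Implicit Defensive.
Import Order.TTheory GRing.Theory Num.Theory.
Local Open Scope ring_scope.

(* A weighted graph on a finite vertex type V is given by g : V -> V -> option int,
   g x y = Some c meaning an edge xy of weight c, None meaning no edge. *)

Fixpoint walk_weight (V : Type) (g : V -> V -> option int) (p : V) (s : seq V)
  : option int :=
  match s with
  | [::] => Some 0
  | q :: s' =>
      match g p q, walk_weight g q s' with
      | Some a, Some b => Some (a + b)
      | _, _ => None
      end
  end.

Definition is_dist (V : Type) (g : V -> V -> option int) (p q : V) (d : int) : Prop :=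
  (exists s, last p s = q /\ walk_weight g p s = Some d) /\
  (forall s c, last p s = q -> walk_weight g p s = Some c -> d <= c).

Definition wext (T : Type) (E : T -> T -> bool) (w0 : T -> T -> int) (M : int)
  (u v : T) : int := if E u v then w0 u v else 4 * M.

(* Vertices of G': pairs (u, c) with c : 'I_5 encoding the copy:
   0 = A, 1 = B, 2 = B', 3 = C, 4 = C'. *)
Definition clsA : 'I_5 := @Ordinal 5 0 isT.

(* One orientation of the edge list, with all weights multiplied by k and the
   +-1 perturbation for the A-vertices u_A with u in S.  G' = (k = 1, S = set0),
   G'_S = (k = 4n, S). *)
Definition gpre (T : finType) (w : T -> T -> int) (H k : int) (S : {set T})
  (x y : T * 'I_5) : option int :=
  let u := x.1 in let v := y.1 in
  let s : int := (nat_of_bool (u \in S))%:Z in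
  match nat_of_ord x.2, nat_of_ord y.2 with
  | 0%N, 1%N => Some (k * (3 * H + w u v) - s)
  | 0%N, 2%N => Some (k * (3 * H - w u v) + s)
  | 0%N, 3%N => Some (k * (6 * H - w v u) - s)
  | 0%N, 4%N => Some (k * (3 * H + w v u))
  | 1%N, 3%N => Some (k * (3 * H + w u v))
  | 0%N, 0%N => if u != v then Some (k * H) else None
  | _, _ => None
  end.

Definition gund (T : finType) (w : T -> T -> int) (H k : int) (S : {set T})
  (x y : T * 'I_5) : option int :=
  match gpre w H k S x y with
  | Some c => Some c
  | None => gpre w H k S y x
  end.

Definition is_median_value (V : finType) (D : V -> V -> int) (m : int) : Prop :=
  (exists p, m = \sum_q D p q) /\ (forall p, m <= \sum_q D p q).

From HB Require Import structures.
From mathcomp Require Import all_boot all_order all_algebra.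
From mathcomp Require Import zify.
Set Implicit Arguments. Unset Strict Implicit. Unset Printing Implicit Defensive.
Import Order.TTheory GRing.Theory Num.Theory.
Local Open Scope ring_scope.

(* Distances from an A-vertex u_A have a closed form: the obvious candidate
   values form a feasible potential (no edge shortens them) and each is realised
   by a walk of length at most two, the only detour being u_A x_B v_C, which
   beats the edge u_A v_C exactly when u -> x -> v -> u is a negative triangle.
   Hence the distance sum of u_A in G'_S is 4n times its value in G' minus
   n [u \in S].  Every edge at a non-A vertex is heavy, so non-A vertices have
   strictly larger distance sums and the median of G'_S sits at some u_A.  As
   4n is even and n odd, its parity records whether u \in S, and since the
   perturbation n is below the scale 4n, the minimiser u also minimises the
   distance sum in G', with ties broken in favour of S. *)

Definition potential (V : Type) (g : V -> V -> option int) (psi : V -> int) :=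
  forall x y c, g x y = Some c -> psi y <= psi x + c.

Section Potentials.
Variables (V : Type) (g : V -> V -> option int) (psi : V -> int).
Hypothesis psiP : potential g psi.

Lemma potential_walk s p c :
  walk_weight g p s = Some c -> psi (last p s) <= psi p + c.
Proof.
elim: s p c => [|q s IH] p c /=; first by move=> [<-]; rewrite addr0.
case e1: (g p q) => [a|] //; case e2: (walk_weight g q s) => [b|] // [<-].
by have := IH _ _ e2; have := psiP e1; lia.
Qed.

Lemma potential_le_dist p q d : psi p = 0 -> is_dist g p q d -> psi q <= d.
Proof.
by move=> psi_p [[s [<- sd]] _]; have := potential_walk sd; rewrite psi_p add0r.
Qed.

Lemma dist_eq_potential p q d : psi p = 0 ->
  (exists2 s, last p s = q & walk_weight g p s = Some (psi q)) ->
  is_dist g p q d -> d = psi q.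
Proof.
move=> psi_p [s sq sw] dP; apply: le_anti.
by rewrite (dP.2 s _ sq sw) (potential_le_dist psi_p dP).
Qed.

End Potentials.

Definition symmetrize (V : Type) (g : V -> V -> option int) (x y : V) :=
  match g x y with Some c => Some c | None => g y x end.

Lemma potential_symmetrize (V : Type) (g : V -> V -> option int) psi :
  (forall x y c, g x y = Some c -> psi y <= psi x + c /\ psi x <= psi y + c) ->
  potential (symmetrize g) psi.
Proof.
move=> gP x y c; rewrite /symmetrize; case exy: (g x y) => [c'|].
  by move=> [<-]; case: (gP _ _ _ exy).
by move=> /gP[].
Qed.

Lemma sum_pair (R : nmodType) (I J : finType) (F : I * J -> R) :
  \sum_q F q = \sum_i \sum_j F (i, j).
Proof. by rewrite pair_bigA; apply: eq_bigr => -[]. Qed.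

Lemma odd_perturbed_min (I : finType) (S : {set I}) (f : I -> int)
    (k : int) (n : nat) (m : int) :
  ~~ odd `|k|%N -> odd n -> n%:Z < k ->
  (exists u, m = k * f u - (u \in S)%:Z * n%:Z) ->
  (forall u, m <= k * f u - (u \in S)%:Z * n%:Z) ->
  odd `|m|%N <-> exists u, u \in S /\ forall v, f u <= f v.
Proof.
have oddE x : odd x = (x %% 2 == 1)%N by rewrite modn2; case: odd.
rewrite !oddE => /eqP k_even /eqP n_odd ltnk [u0 ->] m_min.
have [j kE] : exists j : int, k = 2 * j by exists (k %/ 2)%Z; lia.
rewrite kE in ltnk m_min *.
have [u0S|u0S] := boolP (u0 \in S); split => /=.
- move=> _; exists u0; split=> // v; rewrite leNgt; apply/negP => lt_v.
  by have := m_min v; rewrite u0S; case: (v \in S) => /=; nia.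
- by move=> _; apply/eqP; lia.
- by move/eqP; lia.
- move=> [u [uS u_min]]; have := m_min u; have := u_min u0.
  by rewrite uS (negbTE u0S) /=; nia.
Qed.

Definition clsB : 'I_5 := @Ordinal 5 1 isT.
Definition clsBp : 'I_5 := @Ordinal 5 2 isT.
Definition clsC : 'I_5 := @Ordinal 5 3 isT.
Definition clsCp : 'I_5 := @Ordinal 5 4 isT.

Lemma gpre_edge_ind (T : finType) (w : T -> T -> int) (H k : int)
    (S : {set T}) (P : T * 'I_5 -> T * 'I_5 -> int -> Prop) :
  let s a : int := (a \in S)%:Z in
  (forall a b, a != b -> P (a, clsA) (b, clsA) (k * H)) ->
  (forall a b, P (a, clsA) (b, clsB) (k * (3 * H + w a b) - s a)) ->
  (forall a b, P (a, clsA) (b, clsBp) (k * (3 * H - w a b) + s a)) ->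
  (forall a b, P (a, clsA) (b, clsC) (k * (6 * H - w b a) - s a)) ->
  (forall a b, P (a, clsA) (b, clsCp) (k * (3 * H + w b a))) ->
  (forall a b, P (a, clsB) (b, clsC) (k * (3 * H + w a b))) ->
  forall x y c, gpre w H k S x y = Some c -> P x y c.
Proof.
move=> s hAA hAB hABp hAC hACp hBC [a [i hi]] [b [j hj]] c; rewrite /gpre /=.
case: i hi => [|[|[|[|[|i]]]]] hi; case: j hj => [|[|[|[|[|j]]]]] hj //=;
  rewrite ?(bool_irrelevance hi isT) ?(bool_irrelevance hj isT).
- by case: ifP => // neq_ab [<-]; apply: hAA.
- by move=> [<-]; apply: hAB.
- by move=> [<-]; apply: hABp.
- by move=> [<-]; apply: hAC.
- by move=> [<-]; apply: hACp.
- by move=> [<-]; apply: hBC.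
Qed.

Lemma wext_bounds (T : Type) (E : T -> T -> bool) (w0 : T -> T -> int) M :
  1 <= M -> (forall u v, E u v -> - M <= w0 u v <= M) ->
  forall u v, - M <= wext E w0 M u v <= 4 * M.
Proof.
move=> M_ge1 w0_bd u v; rewrite /wext; case: ifP => [/w0_bd|_]; lia.
Qed.

Section Distances.
Variables (T : finType) (w : T -> T -> int) (M : int).
Hypothesis M_ge1 : 1 <= M.
Hypothesis w_bd : forall u v, - M <= w u v <= 4 * M.
Local Notation H := (100 * M).
Local Notation n := (#|T|%:Z).

(* The neutral element 0 stands for the direct edge u_A v_C. *)
Definition min_triangle (u v : T) : int :=
  \big[Order.min/0]_x (w u x + w x v + w v u).

Lemma min_triangle_le0 u v : min_triangle u v <= 0.
Proof. exact: bigmin_le_id. Qed.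

Lemma min_triangle_le u v x : min_triangle u v <= w u x + w x v + w v u.
Proof. exact: bigmin_le. Qed.

Lemma min_triangle_ge u v : - (3 * M) <= min_triangle u v.
Proof.
apply: le_bigmin => [|x _]; first lia.
by have := w_bd u x; have := w_bd x v; have := w_bd v u; lia.
Qed.

Lemma min_triangleP u v :
  min_triangle u v = 0 \/ exists x, min_triangle u v = w u x + w x v + w v u.
Proof.
rewrite /min_triangle; elim/big_ind: _ => [|a b ha hb|x _]; first by left.
- by case: leP => _; [apply: ha | apply: hb].
- by right; exists x.
Qed.

Definition distA (k : int) (S : {set T}) (u : T) (y : T * 'I_5) : int :=
  let v := y.1 in let s : int := (u \in S)%:Z in
  match nat_of_ord y.2 with
  | 0%N => if v == u then 0 else k * H
  | 1%N => k * (3 * H + w u v) - s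
  | 2%N => k * (3 * H - w u v) + s
  | 3%N => k * (6 * H - w v u + min_triangle u v) - s
  | _ => k * (3 * H + w v u)
  end.

Lemma distA_potential k S u : 1 <= k -> potential (gund w H k S) (distA k S u).
Proof.
move=> k_ge1; apply: potential_symmetrize.
apply: gpre_edge_ind => a b; rewrite /distA /=.
- move=> _; case: (a == u); case: (b == u); split; nia.
- have := w_bd u b; have := w_bd a b.
  case: (eqVneq a u) => [->|_]; case: (u \in S); case: (a \in S) => /=; split; nia.
- have := w_bd u b; have := w_bd a b.
  case: (eqVneq a u) => [->|_]; case: (u \in S); case: (a \in S) => /=; split; nia.
- have := w_bd b u; have := w_bd b a.
  have := min_triangle_le0 u b; have := min_triangle_ge u b.
  case: (eqVneq a u) => [->|_]; case: (u \in S); case: (a \in S) => /=; split; nia.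
- have := w_bd b u; have := w_bd b a.
  case: (eqVneq a u) => [->|_]; split; nia.
- have := w_bd u a; have := w_bd a b; have := w_bd b u.
  have := min_triangle_le u b a.
  have := min_triangle_le0 u b; have := min_triangle_ge u b.
  case: (u \in S) => /=; split; nia.
Qed.

Lemma dist_from_A k S u y d : 1 <= k ->
  is_dist (gund w H k S) (u, clsA) y d -> d = distA k S u y.
Proof.
move=> k_ge1; apply: (dist_eq_potential (@distA_potential k S u k_ge1)).
  by rewrite /distA /= eqxx.
case: y => v [[|[|[|[|[|//]]]]] hj]; rewrite ?(bool_irrelevance hj isT).
- case: (eqVneq v u) => [->|neq_vu].
    by exists [::] => //; rewrite /distA /= eqxx.
  exists [:: (v, clsA)] => //.
  by rewrite /= /gund /gpre /= eq_sym neq_vu /distA /= (negbTE neq_vu) addr0.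
- by exists [:: (v, clsB)]; rewrite //= addr0.
- by exists [:: (v, clsBp)]; rewrite //= addr0.
- have [tri0|[x trix]] := min_triangleP u v.
    by exists [:: (v, clsC)]; rewrite //= /distA /= tri0 !addr0.
  by exists [:: (x, clsB); (v, clsC)]; rewrite //= /distA /= trix; congr Some; lia.
- by exists [:: (v, clsCp)]; rewrite //= addr0.
Qed.

(* Edges at a non-A vertex weigh at least e, and at least k (3H - M) between
   copies B and C; so two steps cost at least 2e unless they use such an edge. *)
Definition nonA_lb (k : int) (u : T) (i : 'I_5) (y : T * 'I_5) : int :=
  let e := k * (3 * H - 4 * M) - 1 in
  if (y.1 == u) && (y.2 == i) then 0
  else if y.2 == clsA then e
  else if [&& i == clsB & y.2 == clsC] || [&& i == clsC & y.2 == clsB]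
    then k * (3 * H - M)
  else 2 * e.

Lemma nonA_lb_potential k S u i : i != clsA -> 1 <= k ->
  potential (gund w H k S) (nonA_lb k u i).
Proof.
move=> iA k_ge1; apply: potential_symmetrize; apply: gpre_edge_ind => a b;
  [move=> _|..]; rewrite /nonA_lb /=; have := w_bd a b; have := w_bd b a;
  case: (a \in S); case: (a == u); case: (b == u);
  case: i iA => [[|[|[|[|[|//]]]]] hi] //= _; split; nia.
Qed.

Lemma dist_from_nonA_ge k S u i q d : i != clsA -> 1 <= k ->
  is_dist (gund w H k S) (u, i) q d -> nonA_lb k u i q <= d.
Proof.
move=> iA k_ge1.
apply: (potential_le_dist (@nonA_lb_potential k S u i iA k_ge1)).
by rewrite /nonA_lb /= !eqxx.
Qed.

Lemma sum_distA k S u :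
  \sum_q distA k S u q = k * \sum_q distA 1 set0 u q - (u \in S)%:Z * n.
Proof.
have sum_copies v : \sum_(c < 5) distA k S u (v, c) =
    k * \sum_(c < 5) distA 1 set0 u (v, c) - (u \in S)%:Z.
  rewrite !big_ord_recl !big_ord0 /distA /= in_set0 /=.
  by case: (v == u); case: (u \in S) => /=; nia.
rewrite !sum_pair (eq_bigr _ (fun v _ => sum_copies v)) sumrB -mulr_sumr.
by rewrite sumr_const -mulr_natr natz.
Qed.

Lemma sum_distA_le k S u : 1 <= k -> \sum_q distA k S u q <= 16 * (k * H) * n.
Proof.
move=> k_ge1; rewrite sum_pair -natz mulr_natr -sumr_const.
apply: ler_sum => v _.
rewrite !big_ord_recl !big_ord0 /distA /=.
have := min_triangle_le0 u v; have := w_bd u v; have := w_bd v u.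
by case: (v == u); case: (u \in S) => /=; nia.
Qed.

Lemma sum_nonA_lb_ge k u i : i != clsA -> 1 <= k ->
  6 * (k * (3 * H - 4 * M) - 1) * n <= \sum_q nonA_lb k u i q.
Proof.
move=> iA k_ge1; rewrite sum_pair -natz mulr_natr -sumr_const.
apply: ler_sum => v _.
rewrite !big_ord_recl !big_ord0 /nonA_lb /=.
by case: (v == u); case: i iA => [[|[|[|[|[|//]]]]] hi] //= _; nia.
Qed.

Section MedianCandidates.
Variables (k : int) (S : {set T}) (D : T * 'I_5 -> T * 'I_5 -> int).
Hypothesis k_ge1 : 1 <= k.
Hypothesis D_dist : forall p q, is_dist (gund w H k S) p q (D p q).

Lemma sum_dist_from_A u : \sum_q D (u, clsA) q = \sum_q distA k S u q.
Proof. by apply: eq_bigr => q _; apply: dist_from_A. Qed.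

Lemma sum_dist_from_A_lt_nonA u v i : i != clsA ->
  \sum_q D (u, clsA) q < \sum_q D (v, i) q.
Proof.
move=> iA; have n_gt0 : 0 < n by rewrite ltz_nat; apply/card_gt0P; exists u.
have ub := sum_distA_le S u k_ge1.
have lb : \sum_q nonA_lb k v i q <= \sum_q D (v, i) q.
  by apply: ler_sum => q _; apply: dist_from_nonA_ge iA k_ge1 (D_dist _ q).
have := le_trans (sum_nonA_lb_ge v iA k_ge1) lb.
have gap : 16 * (k * H) * n < 6 * (k * (3 * H - 4 * M) - 1) * n.
  by rewrite ltr_pM2r //; nia.
by rewrite sum_dist_from_A; lia.
Qed.
End MedianCandidates.
End Distances.

Theorem mainTheorem8 (T : finType) (E : T -> T -> bool) (w0 : T -> T -> int)
  (M : int) (S : {set T})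
  (hn : odd #|T|) (hM : 1 <= M)
  (hw : forall u v, E u v -> - M <= w0 u v <= M)
  (D' DS : (T * 'I_5) -> (T * 'I_5) -> int)
  (hD' : forall p q,
     is_dist (gund (wext E w0 M) (100 * M) 1 set0) p q (D' p q))
  (hDS : forall p q,
     is_dist (gund (wext E w0 M) (100 * M) (4 * (#|T|)%:Z) S) p q (DS p q))
  (m : int) (hm : is_median_value DS m) :
  odd `|m|%N <->
  (exists u, u \in S /\
     forall p, \sum_q D' (u, clsA) q <= \sum_q D' p q).
Proof.
have w_bd := wext_bounds hM hw.
have k_ge1 : 1 <= 4 * #|T|%:Z by move: hn; case: #|T|.
have one_ge1 : (1 : int) <= 1 by [].
pose f u := \sum_q D' (u, clsA) q.
have sumDS u :
    \sum_q DS (u, clsA) q = 4 * #|T|%:Z * f u - (u \in S)%:Z * #|T|%:Z.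
  rewrite /f (sum_dist_from_A hM w_bd k_ge1 hDS).
  by rewrite (sum_dist_from_A hM w_bd one_ge1 hD') sum_distA.
case: hm => -[[u0 i0] m_eq] m_min.
have i0A : i0 = clsA.
  apply/eqP; apply: contraT => i0A; have := m_min (u0, clsA).
  by rewrite m_eq leNgt (sum_dist_from_A_lt_nonA hM w_bd k_ge1 hDS _ _ i0A).
rewrite (@odd_perturbed_min _ S f (4 * #|T|%:Z) #|T|) //.
- split=> -[u [uS u_min]]; exists u; split=> //; last by move=> v; apply: u_min.
  case=> v i; have [->|iA] := eqVneq i clsA; first exact: u_min.
  exact/ltW/(sum_dist_from_A_lt_nonA hM w_bd one_ge1 hD').
- by rewrite abszM oddM.
- by rewrite -[ltLHS]mul1r ltr_pM2r ?ltz_nat; move: hn; case: #|T|.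
- by exists u0; rewrite -sumDS -i0A.
- by move=> u; rewrite -sumDS.
Qed.
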